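(* Let $q=p^h$ be a prime power and let $G$ be a finite group whose irreducible complex character degrees, with multiplicity, are $1$ ($q-1$ times), $q-1$ (once), and $q$ ($q-1$ times). If $N$ is a non-identity normal subgroup of $G$ such that $G/N$ is nonabelian, then the irreducible character degrees of $G/N$ are $1$ ($q-1$ times) and $q-1$ (once). Moreover, $(G/N)'$ is an elementary abelian $p$-group. *)

From mathcomp Require Import all_boot all_algebra all_fingroup all_solvable all_field all_character.
Set Implicit Arguments. Unset Strict Implicit. Unset Printing Implicit Defensive.
Import GRing.Theory Num.Theory.
Local Open Scope ring_scope.

Definition irr_degrees (gT : finGroupType) (G : {group gT}) : seq algC :=
  [seq 'chi[G]_i 1%g | i : Iirr G].

(* The irreducible degrees of G/N are a sub-multiset of those of G; their
   squares sum to |G/N| < |G|, they contain 1 and (as G/N is nonabelian) some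
   degree other than 1, and each divides |G/N|.  This arithmetic leaves only the
   degrees 1 (q-1 times) and q-1.  A group H with these degrees has order
   q(q-1) and |H'| = q, and the second orthogonality relation gives
   |C_H(g)| = q for every 1 <> g in H', so the nonidentity elements of the
   p-group H' form a single H-class; such a group is elementary abelian. *)

From mathcomp Require Import all_boot all_algebra all_fingroup all_solvable all_field all_character.
From mathcomp Require Import zify.
Set Implicit Arguments.
Unset Strict Implicit.
Unset Printing Implicit Defensive.
Import GRing.Theory Num.Theory.
Local Open Scope ring_scope.

Lemma mask_nseq (T : Type) (m : bitseq) n (x : T) :
  mask m (nseq n x) = nseq (count id (take n m)) x.
Proof. by elim: n m => [|n IH] [|[] m] //=; rewrite IH. Qed.

Lemma subseq_nseq3 (T : eqType) (s : seq T) n1 n2 n3 x1 x2 x3 :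
  subseq s (nseq n1 x1 ++ nseq n2 x2 ++ nseq n3 x3) ->
  exists a b c, [/\ (a <= n1)%N, (b <= n2)%N, (c <= n3)%N &
    s = nseq a x1 ++ nseq b x2 ++ nseq c x3].
Proof.
have count_take n m : (count id (take n m) <= n)%N.
  by rewrite (leq_trans (count_size _ _)) // size_take_min geq_minl.
case/subseqP=> m; rewrite !size_cat !size_nseq => size_m ->.
rewrite -(cat_take_drop n1 m) mask_cat ?size_take_min ?size_nseq; last lia.
rewrite -(cat_take_drop n2 (drop n1 m)) mask_cat; last first.
  by rewrite size_take_min size_drop size_nseq; lia.
by rewrite !mask_nseq; do 3!eexists; split; last reflexivity; apply: count_take.
Qed.

Section IrrDegrees.
Variables (gT : finGroupType) (G : {group gT}).

Lemma count_irr_degrees (P : pred algC) :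
  #|[pred i : Iirr G | P ('chi_i 1%g)]| = count P (irr_degrees G).
Proof.
rewrite /irr_degrees /image_mem count_map cardE /enum_mem size_filter.
by rewrite count_filter; apply: eq_count => i; rewrite !inE andbT.
Qed.

Lemma size_irr_degrees : size (irr_degrees G) = #|Iirr G|.
Proof. by rewrite size_map -cardE. Qed.

Lemma sum_sqr_irr_degrees : \sum_(u <- irr_degrees G) u ^+ 2 = #|G|%:R.
Proof. by rewrite big_map big_enum /= -irr_sum_square. Qed.

Lemma irr_degrees_dvd (m : nat) : m%:R \in irr_degrees G -> (m %| #|G|)%N.
Proof. by case/imageP=> i _ chi1; have := dvd_irr1_cardG i; rewrite -chi1 dvdC_nat. Qed.

Lemma irr_degrees1 : 1 \in irr_degrees G.
Proof. by apply/imageP; exists 0 => //; rewrite irr0 cfun11. Qed.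

Lemma irr_degrees_nonabelian :
  ~~ abelian G -> exists2 x, x \in irr_degrees G & x != 1.
Proof.
move=> nabG; have [i chi1 | all1] := pickP [pred i : Iirr G | 'chi_i 1%g != 1].
  by exists ('chi_i 1%g) => //; apply/imageP; exists i.
case/negP: nabG; apply/char_abelianP => i.
by rewrite qualifE /= irr_char; have /negbFE := all1 i.
Qed.

Lemma card_irr_degrees3 (a b c x y : nat) :
  perm_eq (irr_degrees G) (nseq a 1 ++ nseq b x%:R ++ nseq c y%:R) ->
  #|G| = (a + b * x ^ 2 + c * y ^ 2)%N.
Proof.
move=> degG; apply/eqP; rewrite -(eqr_nat algC) -sum_sqr_irr_degrees.
rewrite (perm_big _ degG) !big_cat !big_nseq !iter_addr_0 expr1n.
by rewrite !natrD !natrM -!expr2 !mulr_natl /= addrA.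
Qed.

End IrrDegrees.

Lemma count_irr_degrees_quotient (gT : finGroupType) (G N : {group gT}) x :
  (N <| G)%g ->
  (count_mem x (irr_degrees (G / N)%G) <= count_mem x (irr_degrees G))%N.
Proof.
move=> nsNG; rewrite -!count_irr_degrees.
have mod_inj : injective (@mod_Iirr _ G N) := can_inj (mod_IirrK nsNG).
rewrite -(card_image mod_inj) subset_leq_card //; apply/subsetP => _ /imageP[i chi1 ->].
by move: chi1; rewrite !inE mod_IirrE // cfMod1.
Qed.

(* With q = k + 2, a, b and c count the degrees 1, q - 1 and q of a proper
   quotient of order n; the two disjunctions say that 1 is a degree and that
   some degree differs from 1, allowing for q - 1 = 1 when k = 0. *)
Lemma quotient_degree_multiplicities k a b c n :
  (a <= k.+1)%N -> (b <= 1)%N -> (c <= k.+1)%N ->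
  n = (a + b * k.+1 ^ 2 + c * k.+2 ^ 2)%N ->
  n != (k.+1 + k.+1 ^ 2 + k.+1 * k.+2 ^ 2)%N ->
  ((0 < c)%N -> (k.+2 %| n)%N) -> ((0 < b)%N -> (k.+1 %| n)%N) ->
  (0 < a)%N || (0 < b)%N && (k == 0)%N ->
  (0 < c)%N || (0 < b)%N && (k != 0)%N ->
  [/\ a = k.+1, b = 1%N & c = 0%N].
Proof.
move=> le_a le_b le_c def_n ne_n dvd_c dvd_b has1 hasn1.
have [c0 | c_gt0] := posnP c.
  move: hasn1; rewrite c0 /= => /andP[b_gt0 k_neq0].
  have b1 : b = 1%N by lia.
  have a_gt0 : (0 < a)%N by move: has1; rewrite (negbTE k_neq0) andbF orbF.
  have := dvd_b b_gt0; rewrite def_n b1 c0 mul1n mul0n addn0 dvdn_addl ?dvdn_exp //.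
  by move/(dvdn_leq a_gt0) => ?; split=> //; lia.
have [b0 | b_gt0] := posnP b.
  have := dvd_c c_gt0; rewrite def_n b0 mul0n addn0 dvdn_addl ?dvdn_mull ?dvdn_exp //.
  by move: has1; rewrite b0 /= orbF => a_gt0 /(dvdn_leq a_gt0); lia.
have b1 : b = 1%N by lia.
have := dvd_c c_gt0; have -> : n = (a.+1 + k.+2 * (k + c * k.+2))%N by lia.
rewrite dvdn_addl ?dvdn_mulr // => /(dvdn_leq (ltn0Sn _)) le_a1.
have a_eq : a = k.+1 by lia.
case/negP: ne_n; have := dvd_b b_gt0.
rewrite def_n a_eq b1 mul1n -addnA dvdn_addr // dvdn_addr ?dvdn_exp //.
rewrite Gauss_dvdl ?coprimeXr ?coprimenS // => /(dvdn_leq c_gt0) lt_k_c.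
by rewrite addnA (_ : c = k.+1) //; lia.
Qed.

Lemma quotient_irr_degrees (gT : finGroupType) (G N : {group gT}) k :
  perm_eq (irr_degrees G) (nseq k.+1 1 ++ [:: k.+1%:R] ++ nseq k.+1 k.+2%:R) ->
  (N <| G)%g -> (N :!=: 1)%g -> ~~ abelian (G / N)%g ->
  perm_eq (irr_degrees (G / N)%G) (nseq k.+1 1 ++ [:: k.+1%:R]) /\ k != 0%N.
Proof.
move=> degG nsNG ntN nabGN; set D := irr_degrees (G / N)%G.
have [s] : exists2 s, subseq s (nseq k.+1 1 ++ nseq 1 k.+1%:R ++ nseq k.+1 k.+2%:R)
    & perm_eq D s.
  by apply/count_subseqP => x; rewrite -(seq.permP degG) count_irr_degrees_quotient.
case/subseq_nseq3=> a [b [c [le_a le_b le_c ->]]] degGN.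
have memD x : (x \in D) = (x \in nseq a 1 ++ nseq b k.+1%:R ++ nseq c k.+2%:R).
  exact: perm_mem.
have ne_card : #|(G / N)%g| != #|G|.
  rewrite card_quotient ?normal_norm // -(Lagrange (normal_sub nsNG)).
  rewrite -{1}[#|G : N|%g]mul1n eqn_mul2r negb_or -lt0n indexg_gt0 /=.
  by rewrite eq_sym neq_ltn cardG_gt1 ntN orbT.
have has1 : (0 < a)%N || (0 < b)%N && (k == 0)%N.
  move: (irr_degrees1 (G / N)%G); rewrite -/D memD !mem_cat !mem_nseq eqxx andbT.
  by rewrite ![1 == _]eq_sym !pnatr_eq1 /= andbF orbF.
have hasn1 : (0 < c)%N || (0 < b)%N && (k != 0)%N.
  have [x] := irr_degrees_nonabelian nabGN; rewrite -/D memD !mem_cat !mem_nseq.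
  case/or3P=> /andP[n_gt0 /eqP ->]; rewrite ?n_gt0 ?orbT ?eqxx //.
  by rewrite pnatr_eq1 /= => ->; rewrite orbT.
have dvd_c : (0 < c)%N -> (k.+2 %| #|(G / N)%g|)%N.
  move=> c_gt0; apply: irr_degrees_dvd.
  by rewrite memD !mem_cat !mem_nseq c_gt0 eqxx !orbT.
have dvd_b : (0 < b)%N -> (k.+1 %| #|(G / N)%g|)%N.
  move=> b_gt0; apply: irr_degrees_dvd.
  by rewrite memD !mem_cat !mem_nseq b_gt0 eqxx !orbT.
rewrite (card_irr_degrees3 (b := 1) degG) mul1n in ne_card.
have [a_eq b1 c0] := quotient_degree_multiplicities le_a le_b le_c
  (card_irr_degrees3 degGN) ne_card dvd_c dvd_b has1 hasn1.
by move: hasn1 degGN; rewrite a_eq b1 c0 cats0.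
Qed.

Lemma transitive_conj_abelem (gT : finGroupType) (H K : {group gT}) p :
  prime p -> (p.-group K)%g -> (K :!=: 1)%g -> (K <| H)%g ->
  (forall g, g \in K^#%g -> (g ^: H)%g = K^#%g) -> (p.-abelem K)%g.
Proof.
move=> p_pr pK ntK nsKH classK.
have inK1 x : x \in K -> x != 1%g -> x \in K^#%g by rewrite !inE => -> ->.
rewrite abelemE //; apply/andP; split.
  have [z Zz z1] := trivgPn _ (contra_neq (trivg_center_pgroup pK) ntK).
  have nsZH : ('Z(K) <| H)%g := char_normal_trans (center_char K) nsKH.
  apply/center_idP/eqP; rewrite eqEsubset center_sub; apply/subsetP => g Kg.
  have [-> | g1] := eqVneq g 1%g; first exact: group1.
  have /imsetP[w Hw ->] : g \in (z ^: H)%g.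
    by rewrite classK ?inK1 // (subsetP (center_sub K)).
  by rewrite memJ_norm // (subsetP (normal_norm nsZH)).
have [_ p_dv_K _] := pgroup_pdiv pK ntK.
have [x Kx ox] := Cauchy p_pr p_dv_K.
have x1 : x != 1%g by apply: contraTneq (prime_gt1 p_pr) => x1; rewrite -ox x1 order1.
apply/exponentP => g Kg; have [-> | g1] := eqVneq g 1%g; first exact: expg1n.
have /imsetP[w _ ->] : g \in (x ^: H)%g by rewrite classK ?inK1.
by rewrite -ox -(orderJ x w) expg_order.
Qed.

Section AffineDegrees.
Variables (gT : finGroupType) (H : {group gT}) (k : nat).
Hypotheses (k_neq0 : k != 0%N)
  (degH : perm_eq (irr_degrees H) (nseq k.+1 1 ++ [:: k.+1%:R])).

Lemma card_affine_degrees : #|H| = (k.+2 * k.+1)%N.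
Proof. by rewrite (card_irr_degrees3 (b := 1) (c := 0) (y := 0) degH); lia. Qed.

Lemma nonlinear_irr_unique : exists i0 : Iirr H,
  'chi_i0 1%g = k.+1%:R /\ forall i, i != i0 -> 'chi_i 1%g = 1.
Proof.
have r1 : k.+1%:R != 1 :> algC by rewrite pnatr_eq1.
have [i0 def_i0] : exists i0, [pred i : Iirr H | 'chi_i 1%g == k.+1%:R] =i pred1 i0.
  apply/card1P; rewrite (@count_irr_degrees _ H (pred1 k.+1%:R)) (seq.permP degH).
  by rewrite count_cat count_nseq /= eqxx [1 == _]eq_sym (negbTE r1).
exists i0; split; first by apply/eqP; have := def_i0 i0; rewrite !inE eqxx.
move=> i ne_i; have : 'chi_i 1%g \in irr_degrees H by apply/imageP; exists i.
rewrite (perm_mem degH) mem_cat mem_nseq mem_seq1 => /orP[/eqP // | r_chi].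
by have := def_i0 i; rewrite !inE r_chi (negbTE ne_i).
Qed.

Lemma card_Iirr_affine_degrees : #|Iirr H| = k.+2.
Proof. by rewrite -size_irr_degrees (perm_size degH) size_cat size_nseq addn1. Qed.

Lemma card_der1 : #|H^`(1)%g| = k.+2.
Proof.
have [i0 [chi_i0 lin1]] := nonlinear_irr_unique.
have card_lin : #|[pred i : Iirr H | 'chi_i \is a linear_char]| = k.+1.
  rewrite -[k.+1]/(k.+2.-1) -card_Iirr_affine_degrees -(cardC1 i0).
  apply: eq_card => i; rewrite !inE qualifE /= irr_char /=.
  have [-> | /lin1 ->] := eqVneq i i0; last by rewrite eqxx.
  by rewrite chi_i0 pnatr_eq1 eqSS (negbTE k_neq0).
have := Lagrange (der_sub 1 H); rewrite -card_lin_irr card_lin card_affine_degrees.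
by move/eqP; rewrite eqn_mul2r /= => /eqP.
Qed.

Lemma card_cent1_der1 g : g \in (H^`(1))^#%g -> #|'C_H[g]%g| = k.+2.
Proof.
case/setD1P=> g1 H'g; have Hg := subsetP (der_sub 1 H) g H'g.
have [i0 [chi_i0 lin1]] := nonlinear_irr_unique.
have chi_g i : i != i0 -> 'chi_i g = 1.
  by move=> ne_i; rewrite cfker1 ?lin1 // (subsetP _ g H'g) // -lin_irr_der1
     qualifE /= irr_char /= lin1.
have orth y : y \in H ->
    'chi_i0 g * ('chi_i0 y)^* + \sum_(i | i != i0) ('chi_i y)^*
      = #|'C_H[g]%g|%:R *+ (g \in (y ^: H)%g).
  move=> Hy; rewrite -second_orthogonality_relation // [RHS](bigD1 i0) //=; congr (_ + _).
  by apply: eq_bigr => i /chi_g ->; rewrite mul1r.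
have sum_conj1 y : (forall i, i != i0 -> 'chi_i y = 1) ->
    \sum_(i | i != i0) ('chi_i y)^* = k.+1%:R.
  move=> chi_y1; rewrite (eq_bigr (fun=> 1)) => [|i /chi_y1 ->]; last exact: conjC1.
  by rewrite sumr_const cardC1 card_Iirr_affine_degrees.
have chi_i0_g : 'chi_i0 g = -1.
  have := orth 1%g (group1 H); rewrite class1G inE (negbTE g1) mulr0n chi_i0.
  rewrite conjC_nat sum_conj1 // -[X in _ + X = _]mul1r -mulrDl => /eqP.
  by rewrite mulf_eq0 pnatr_eq0 orbF addr_eq0 => /eqP.
have := orth g Hg; rewrite class_refl mulr1n chi_i0_g rmorphN1 mulrNN sum_conj1 //.
by rewrite addrC mulr1 natr1 => /eqP; rewrite eqr_nat => /eqP.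
Qed.

Lemma der1_class g : g \in (H^`(1))^#%g -> (g ^: H)%g = (H^`(1))^#%g.
Proof.
move=> H'g; have [g1 H'g1] := setD1P H'g.
have card_class : #|(g ^: H)%g| = k.+1.
  have := Lagrange (subsetIl H 'C[g]%g); rewrite card_cent1_der1 // card_affine_degrees.
  by rewrite index_cent1 => /eqP; rewrite eqn_mul2l /= => /eqP.
apply/eqP; rewrite eqEcard card_class; apply/andP; split.
  apply/subsetP => _ /imsetP[w Hw ->]; rewrite !inE conjg_eq1 g1 /=.
  by rewrite memJ_norm // (subsetP (normal_norm (der_normal 1 H))).
by have := card_der1; rewrite (cardsD1 1%g) group1 add1n => -[->].
Qed.

End AffineDegrees.

Theorem mainTheorem7 (p h : nat) (gT : finGroupType) (G N : {group gT}) :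
  prime p -> (0 < h)%N ->
  perm_eq (irr_degrees G)
    (nseq (p ^ h)%N.-1 1 ++ [:: ((p ^ h)%N.-1)%:R] ++ nseq (p ^ h)%N.-1 (p ^ h)%N%:R) ->
  (N <| G)%g -> (N :!=: 1)%g -> ~~ abelian (G / N)%g ->
  perm_eq (irr_degrees (G / N)%G) (nseq (p ^ h)%N.-1 1 ++ [:: ((p ^ h)%N.-1)%:R])
  /\ (p.-abelem (G / N)^`(1))%g.
Proof.
move=> p_pr h_gt0 degG nsNG ntN nabGN.
have [k q_eq] : exists k, (p ^ h)%N = k.+2.
  exists (p ^ h - 2)%N; have := ltn_exp2l 0 h (prime_gt1 p_pr); rewrite expn0; lia.
rewrite q_eq /= in degG *.
have [degGN k_neq0] := quotient_irr_degrees degG nsNG ntN nabGN.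
have card_H' := card_der1 k_neq0 degGN.
split=> //; apply: (transitive_conj_abelem p_pr _ _ (der_normal 1 _)).
- by rewrite /pgroup card_H' -q_eq pnatX pnat_id.
- by rewrite -cardG_gt1 card_H'.
- exact: der1_class k_neq0 degGN.
Qed.
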